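(* Let $M^2(\rho)$ be a 2-dimensional Riemannian space form of constant curvature $\rho$. If $\rho\le 0$, the only triharmonic curves in $M^2(\rho)$ are geodesics. If $\rho>0$, the triharmonic curves in $M^2(\rho)$ are either geodesics or circles (curves of constant geodesic curvature $\kappa_g$) satisfying $\kappa_g^2=2\rho$.
   Context: An arc-length parametrized curve $\gamma$ in a Riemannian manifold $M$ with Levi-Civita connection $\nabla$, curvature tensor $R^M(X,Y)=\nabla_X\nabla_Y-\nabla_Y\nabla_X-\nabla_{[X,Y]}$ and $T=\gamma'$ is called triharmonic if $\nabla_T^5T+R^M(\nabla_T^3T,T)T-R^M(\nabla_T^2T,\nabla_TT)T=0$. The geodesic curvature $\kappa_g$ of a curve in a surface is defined by $\nabla_TT=\kappa_gJT$, with $J$ the rotation by $\pi/2$. *)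

From Stdlib Require Import Reals.
From Coquelicot Require Import Coquelicot.
Open Scope R_scope.

(* Vectors of R^3 (ambient space of the model surfaces). *)
Record vec3 := V3 { c1 : R; c2 : R; c3 : R }.

Definition vzero : vec3 := V3 0 0 0.
Definition vadd (u v : vec3) : vec3 := V3 (c1 u + c1 v) (c2 u + c2 v) (c3 u + c3 v).
Definition vscal (a : R) (u : vec3) : vec3 := V3 (a * c1 u) (a * c2 u) (a * c3 u).
Definition vsub (u v : vec3) : vec3 := vadd u (vscal (-1) v).

(* Ambient metric: Euclidean (e = 1) for rho >= 0, Lorentzian (e = -1) for rho < 0. *)
Definition eps (rho : R) : R := if Rlt_dec rho 0 then -1 else 1.
Definition ip (e : R) (u v : vec3) : R := c1 u * c1 v + c2 u * c2 v + e * (c3 u * c3 v).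
(* Cross product adapted to the metric diag(1,1,e). *)
Definition cross (e : R) (u v : vec3) : vec3 :=
  V3 (c2 u * c3 v - c3 u * c2 v) (c3 u * c1 v - c1 u * c3 v) (e * (c1 u * c2 v - c2 u * c1 v)).

(* The model space form M^2(rho):
   rho = 0 : the plane {x3 = 0} in Euclidean R^3;
   rho > 0 : the sphere {<x,x> = 1/rho} in Euclidean R^3;
   rho < 0 : the hyperboloid {<x,x>_L = 1/rho} in Minkowski R^{2,1}. *)
Definition in_space_form (rho : R) (x : vec3) : Prop :=
  if Req_EM_T rho 0 then c3 x = 0 else ip (eps rho) x x = / rho.

Definition vderiv (V : R -> vec3) (t : R) : vec3 :=
  V3 (Derive (fun s => c1 (V s)) t) (Derive (fun s => c2 (V s)) t) (Derive (fun s => c3 (V s)) t).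

(* Levi-Civita covariant derivative along gamma in M^2(rho): tangential
   projection of the ambient derivative (the unit normal direction at x is x,
   with <x,x> = 1/rho; for rho = 0 the projection is the identity). *)
Definition nabla (rho : R) (g : R -> vec3) (V : R -> vec3) : R -> vec3 :=
  fun t => vsub (vderiv V t) (vscal (rho * ip (eps rho) (vderiv V t) (g t)) (g t)).

Definition tangent (g : R -> vec3) : R -> vec3 := vderiv g.
Fixpoint nablaT (rho : R) (g : R -> vec3) (k : nat) : R -> vec3 :=
  match k with
  | O => tangent g
  | S k' => nabla rho g (nablaT rho g k')
  end.

(* Curvature tensor of a space of constant curvature rho, with the convention
   R(X,Y) = nabla_X nabla_Y - nabla_Y nabla_X - nabla_[X,Y]. *)
Definition curvR (rho : R) (X Y Z : vec3) : vec3 :=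
  vscal rho (vsub (vscal (ip (eps rho) Y Z) X) (vscal (ip (eps rho) X Z) Y)).

(* Unit normal and the rotation J by pi/2 in the tangent plane at x. *)
Definition normalv (rho : R) (x : vec3) : vec3 :=
  if Req_EM_T rho 0 then V3 0 0 1 else vscal (sqrt (Rabs rho)) x.
Definition Jrot (rho : R) (x X : vec3) : vec3 := cross (eps rho) (normalv rho x) X.

Definition smooth_on (a b : R) (g : R -> vec3) : Prop :=
  forall (n : nat) (t : R), a < t < b ->
    ex_derive_n (fun s => c1 (g s)) n t /\
    ex_derive_n (fun s => c2 (g s)) n t /\
    ex_derive_n (fun s => c3 (g s)) n t.

Definition arc_length (rho a b : R) (g : R -> vec3) : Prop :=
  forall t, a < t < b -> ip (eps rho) (tangent g t) (tangent g t) = 1.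

Definition triharmonic (rho a b : R) (g : R -> vec3) : Prop :=
  forall t, a < t < b ->
    vadd (nablaT rho g 5 t)
      (vsub (curvR rho (nablaT rho g 3 t) (tangent g t) (tangent g t))
            (curvR rho (nablaT rho g 2 t) (nablaT rho g 1 t) (tangent g t))) = vzero.

Definition geodesic (rho a b : R) (g : R -> vec3) : Prop :=
  forall t, a < t < b -> nablaT rho g 1 t = vzero.

Definition circle_with_curvature (rho a b : R) (g : R -> vec3) (kappa : R) : Prop :=
  forall t, a < t < b -> nablaT rho g 1 t = vscal kappa (Jrot rho (g t) (tangent g t)).

(** Along a unit-speed curve in [M^2(rho)] with tangent [T], normal [N = J T] and
    geodesic curvature [kappa], the Frenet equations [nabla_T T = kappa N] and
    [nabla_T N = - kappa T] express [nabla_T^5 T] in the frame [(T, N)].  The tangential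
    part of the triharmonic equation has the first integrals
    [kappa kappa'' + kappa'^2/2 - kappa^4/2 = c] and [kappa (kappa'^2 - 2c - kappa^4/5) = d];
    eliminating the derivatives of [kappa] between these and the normal part gives
    [P(kappa) = 0] for a polynomial [P] of degree 10 with leading coefficient 252.  Where
    [kappa' <> 0], differentiating [P(kappa) = 0] ten times along the curve would give
    [252 * 10! = 0]; so [kappa] is constant, and the normal part reduces to
    [kappa^3 (kappa^2 - 2 rho) = 0]. *)

From Stdlib Require Import Reals Lra Lia Psatz List.
From Coquelicot Require Import Coquelicot.
Open Scope R_scope.
Import ListNotations.

Lemma locally_between (a b t : R) : a < t < b -> locally t (fun s => a < s < b).
Proof.
  intros Ht. apply (locally_interval _ t a b); simpl; tauto.
Qed.

Lemma locally_neq0_continuous (f : R -> R) (t : R) :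
  continuous f t -> f t <> 0 -> locally t (fun s => f s <> 0).
Proof. intros Hf Hne. exact (Hf _ (open_neq 0 (f t) Hne)). Qed.

Lemma is_derive_eq (f : R -> R) (x l l' : R) : is_derive f x l -> l = l' -> is_derive f x l'.
Proof. now intros H <-. Qed.

Lemma is_derive_cst (c x : R) : is_derive (fun _ => c) x 0.
Proof. exact (is_derive_const c x). Qed.

Lemma is_derive_add (f h : R -> R) (x df dh : R) :
  is_derive f x df -> is_derive h x dh -> is_derive (fun s => f s + h s) x (df + dh).
Proof. exact (is_derive_plus f h x df dh). Qed.

Lemma is_derive_sub (f h : R -> R) (x df dh : R) :
  is_derive f x df -> is_derive h x dh -> is_derive (fun s => f s - h s) x (df - dh).
Proof. exact (is_derive_minus f h x df dh). Qed.

Lemma is_derive_neg (f : R -> R) (x df : R) :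
  is_derive f x df -> is_derive (fun s => - f s) x (- df).
Proof. exact (is_derive_opp f x df). Qed.

Lemma is_derive_mul (f h : R -> R) (x df dh : R) :
  is_derive f x df -> is_derive h x dh ->
  is_derive (fun s => f s * h s) x (df * h x + f x * dh).
Proof. intros Hf Hh. exact (is_derive_mult f h x df dh Hf Hh Rmult_comm). Qed.

Lemma is_derive_div_cst (f : R -> R) (x df c : R) :
  is_derive f x df -> is_derive (fun s => f s / c) x (df / c).
Proof.
  intros Hf. unfold Rdiv.
  apply (is_derive_eq _ _ (df * / c + f x * 0)); [|ring].
  apply (is_derive_mul f (fun _ => / c)); [exact Hf | apply is_derive_cst].
Qed.

Ltac derive_step :=
  match goal with
  | |- is_derive (fun _ => ?c) _ _ => apply is_derive_cst
  | |- is_derive (fun s => _ + _) _ _ => apply is_derive_add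
  | |- is_derive (fun s => _ - _) _ _ => apply is_derive_sub
  | |- is_derive (fun s => _ * _) _ _ => apply is_derive_mul
  | |- is_derive (fun s => - _) _ _ => apply is_derive_neg
  | |- is_derive (fun s => _ ^ _) _ _ => apply is_derive_pow
  | |- is_derive (fun s => _ / _) _ _ => apply is_derive_div_cst
  | |- is_derive _ _ _ => eassumption
  end.

Ltac derive_eq :=
  eapply is_derive_eq;
  [ repeat derive_step
  | cbv beta; simpl INR; simpl pred;
    match goal with |- ?l = ?r => change (@eq R l r) end ].

Ltac solve_derive := derive_eq; ring.

Lemma is_derive_locally_const (f : R -> R) (t C l : R) :
  locally t (fun s => f s = C) -> is_derive f t l -> l = 0.
Proof.
  intros Hc Hd.
  apply is_derive_unique in Hd. rewrite <- Hd.
  rewrite (Derive_ext_loc f (fun _ => C)) by exact Hc.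
  apply Derive_const.
Qed.

Lemma continuity_pt_is_derive (f : R -> R) (x l : R) : is_derive f x l -> continuity_pt f x.
Proof.
  intros H. apply continuity_pt_filterlim. exact (ex_derive_continuous f x (ex_intro _ l H)).
Qed.

Lemma const_on_interval (F : R -> R) (a b : R) :
  (forall s, a < s < b -> is_derive F s 0) ->
  forall s u, a < s < b -> a < u < b -> F s = F u.
Proof.
  intros HF s u Hs Hu.
  assert (Hin : forall x, Rmin s u <= x <= Rmax s u -> a < x < b).
  { intros x Hx.
    assert (a < Rmin s u) by (apply Rmin_glb_lt; lra).
    assert (Rmax s u < b) by (apply Rmax_lub_lt; lra).
    lra. }
  destruct (MVT_gen F s u (fun _ => 0)) as [c [_ Hc]].
  - intros x Hx. apply HF, Hin. lra.
  - intros x Hx. apply (continuity_pt_is_derive _ _ 0), HF, Hin, Hx.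
  - lra.
Qed.

Lemma ex_const_on_interval (F : R -> R) (a b : R) :
  (forall s, a < s < b -> is_derive F s 0) ->
  exists C, forall s, a < s < b -> F s = C.
Proof.
  intros HF. exists (F ((a + b) / 2)). intros s Hs.
  apply (const_on_interval F a b HF); lra.
Qed.

Lemma is_derive_vanishing_on_interval (f : R -> R) (a b t l : R) :
  (forall s, a < s < b -> f s = 0) -> a < t < b -> is_derive f t l -> l = 0.
Proof.
  intros Hf Ht. apply is_derive_locally_const with (C := 0).
  exact (filter_imp _ _ Hf (locally_between a b t Ht)).
Qed.

(** * Polynomial relations along a function with nonvanishing derivative *)

(* A pair [(c, m)] stands for the monomial [c x^m]. *)
Definition sparse_poly := list (R * nat).

Definition poly_derive_n (p : sparse_poly) (n : nat) (x : R) : R :=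
  fold_right (fun cm acc => fst cm * Derive_n (fun y => y ^ snd cm) n x + acc) 0 p.

Definition poly_eval (p : sparse_poly) (x : R) : R := poly_derive_n p 0 x.

Lemma is_derive_Derive_n_pow (m n : nat) (x : R) :
  is_derive (Derive_n (fun y => y ^ m) n) x (Derive_n (fun y => y ^ m) (S n) x).
Proof.
  destruct (Compare_dec.le_lt_dec (S n) m) as [Hle | Hlt].
  - rewrite Derive_n_pow_smalli by exact Hle. exact (is_derive_n_pow_smalli (S n) m x Hle).
  - rewrite Derive_n_pow_bigi by exact Hlt. exact (is_derive_n_pow_bigi (S n) m x Hlt).
Qed.

Lemma is_derive_poly_derive_n (p : sparse_poly) (n : nat) (x : R) :
  is_derive (poly_derive_n p n) x (poly_derive_n p (S n) x).
Proof.
  induction p as [|[c m] p IH]; simpl.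
  - apply is_derive_cst.
  - apply is_derive_add; [|exact IH].
    apply (is_derive_eq _ _ (0 * Derive_n (fun y => y ^ m) n x
                             + c * Derive_n (fun y => y ^ m) (S n) x)).
    + apply (is_derive_mul (fun _ => c)); [apply is_derive_cst | apply is_derive_Derive_n_pow].
    + now rewrite Rmult_0_l, Rplus_0_l.
Qed.

Lemma poly_derive_n_degree (c : R) (N : nat) (p : sparse_poly) (x : R) :
  List.Forall (fun cm => (snd cm < N)%nat) p ->
  poly_derive_n ((c, N) :: p) N x = c * INR (Factorial.fact N).
Proof.
  intros Hdeg. simpl. rewrite Derive_n_pow_smalli by lia.
  rewrite Nat.sub_diag. simpl.
  induction Hdeg as [|[c' m] p Hm _ IH]; simpl in *.
  - field.
  - rewrite Derive_n_pow_bigi by exact Hm. lra.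
Qed.

Lemma locally_vanishing_comp (f f' k k' : R -> R) (t0 : R) :
  (forall x, is_derive f x (f' x)) ->
  locally t0 (fun t => is_derive k t (k' t) /\ k' t <> 0) ->
  locally t0 (fun t => f (k t) = 0) ->
  locally t0 (fun t => f' (k t) = 0).
Proof.
  intros Hf Hk Hz.
  generalize (filter_and _ _ Hk (locally_locally _ _ Hz)). apply filter_imp.
  intros t [[Hkt Hne] Hzt].
  pose proof (is_derive_comp f k t _ _ (Hf (k t)) Hkt) as Hfk.
  apply is_derive_locally_const with (C := 0) in Hfk; [|exact Hzt].
  destruct (Rmult_integral _ _ Hfk) as [H0 | H0]; [contradiction | exact H0].
Qed.

(* Differentiating the relation [N] times along [k] leaves the nonzero constant [c * N!]. *)
Lemma poly_comp_not_locally_zero (c : R) (N : nat) (p : sparse_poly) (k k' : R -> R) (t0 : R) :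
  c <> 0 -> List.Forall (fun cm => (snd cm < N)%nat) p ->
  locally t0 (fun t => is_derive k t (k' t) /\ k' t <> 0) ->
  ~ locally t0 (fun t => poly_eval ((c, N) :: p) (k t) = 0).
Proof.
  intros Hc Hdeg Hk Hz.
  assert (Hn : forall n, locally t0 (fun t => poly_derive_n ((c, N) :: p) n (k t) = 0)).
  { induction n as [|n IH]; [exact Hz|].
    apply (locally_vanishing_comp (poly_derive_n ((c, N) :: p) n) _ k k'); [|exact Hk|exact IH].
    intros x. apply is_derive_poly_derive_n. }
  pose proof (locally_singleton _ _ (Hn N)) as HN. cbv beta in HN.
  rewrite poly_derive_n_degree in HN by exact Hdeg.
  destruct (Rmult_integral _ _ HN) as [H0 | H0]; [exact (Hc H0) | exact (INR_fact_neq_0 N H0)].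
Qed.

(** * The curvature equations of a triharmonic curve *)

Definition curvature_poly (rho c d : R) : sparse_poly :=
  [(252, 10%nat); (80 * rho, 8%nat); (1260 * c, 6%nat); (420 * d, 5%nat);
   (25 * rho * d, 3%nat); (300 * c * d, 1%nat); (175 * d * d, 0%nat)].

Lemma curvature_poly_root (rho c d x0 x1 x2 x3 x4 : R) :
  x0 * x2 + x1 ^ 2 / 2 - x0 ^ 4 / 2 = c ->
  x0 * (x1 ^ 2 - 2 * c - x0 ^ 4 / 5) = d ->
  -5 * x0 * x3 - 10 * x1 * x2 + 10 * x0 ^ 3 * x1 = 0 ->
  -5 * x0 * x4 - 15 * x1 * x3 - 10 * x2 ^ 2 + 30 * x0 ^ 2 * x1 ^ 2 + 10 * x0 ^ 3 * x2 = 0 ->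
  x4 - 15 * x0 * x1 ^ 2 - 10 * x0 ^ 2 * x2 + x0 ^ 5 + rho * (x2 - 2 * x0 ^ 3) = 0 ->
  poly_eval (curvature_poly rho c d) x0 = 0.
Proof.
  intros Hc Hd Htan Htan' Hnor.
  destruct (Req_dec x0 0) as [Hx0 | Hx0].
  - subst x0. assert (d = 0) by (rewrite <- Hd; ring). subst d. simpl; ring.
  - (* [-2 x0] times the polynomial lies in the ideal generated by the five relations. *)
    assert (Hcert : -2 * x0 * poly_eval (curvature_poly rho c d) x0 =
      100 * x0 ^ 6 * (x4 - 15 * x0 * x1 ^ 2 - 10 * x0 ^ 2 * x2 + x0 ^ 5 + rho * (x2 - 2 * x0 ^ 3))
      - 5 * (-70 * x0 * d + 20 * x0 ^ 2 * c - 70 * x0 ^ 2 * x1 ^ 2 - 10 * x0 ^ 4 * rho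
             - 154 * x0 ^ 6) * (x0 * (x1 ^ 2 - 2 * c - x0 ^ 4 / 5) - d)
      - 2 * (-100 * x0 ^ 3 * c + 350 * x0 ^ 3 * x1 ^ 2 - 100 * x0 ^ 4 * x2 + 50 * x0 ^ 5 * rho
             - 450 * x0 ^ 7) * (x0 * x2 + x1 ^ 2 / 2 - x0 ^ 4 / 2 - c)
      - 60 * x0 ^ 4 * x1 * (-5 * x0 * x3 - 10 * x1 * x2 + 10 * x0 ^ 3 * x1)
      + 20 * x0 ^ 5 * (-5 * x0 * x4 - 15 * x1 * x3 - 10 * x2 ^ 2 + 30 * x0 ^ 2 * x1 ^ 2
                       + 10 * x0 ^ 3 * x2)).
    { simpl. field. }
    rewrite Hnor, Hd, Hc, Htan, Htan' in Hcert.
    apply (Rmult_eq_reg_l (-2 * x0)).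
    + rewrite Hcert. ring.
    + intros H. apply Hx0. lra.
Qed.

Section CurvatureODE.

Variables (rho a b : R) (k0 k1 k2 k3 k4 : R -> R).
Hypothesis dk0 : forall s, a < s < b -> is_derive k0 s (k1 s).
Hypothesis dk1 : forall s, a < s < b -> is_derive k1 s (k2 s).
Hypothesis dk2 : forall s, a < s < b -> is_derive k2 s (k3 s).
Hypothesis dk3 : forall s, a < s < b -> is_derive k3 s (k4 s).
Hypothesis tangential_eq : forall s, a < s < b ->
  -5 * k0 s * k3 s - 10 * k1 s * k2 s + 10 * k0 s ^ 3 * k1 s = 0.
Hypothesis normal_eq : forall s, a < s < b ->
  k4 s - 15 * k0 s * k1 s ^ 2 - 10 * k0 s ^ 2 * k2 s + k0 s ^ 5
  + rho * (k2 s - 2 * k0 s ^ 3) = 0.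

Lemma tangential_eq_derive (s : R) : a < s < b ->
  -5 * k0 s * k4 s - 15 * k1 s * k3 s - 10 * k2 s ^ 2
  + 30 * k0 s ^ 2 * k1 s ^ 2 + 10 * k0 s ^ 3 * k2 s = 0.
Proof.
  intros Hs. apply (is_derive_vanishing_on_interval _ a b s _ tangential_eq Hs).
  pose proof (dk0 s Hs); pose proof (dk1 s Hs); pose proof (dk2 s Hs); pose proof (dk3 s Hs).
  solve_derive.
Qed.

Lemma first_integral_c : exists c, forall s, a < s < b ->
  k0 s * k2 s + k1 s ^ 2 / 2 - k0 s ^ 4 / 2 = c.
Proof.
  apply ex_const_on_interval. intros s Hs.
  pose proof (dk0 s Hs); pose proof (dk1 s Hs); pose proof (dk2 s Hs).
  derive_eq. pose proof (tangential_eq s Hs). lra.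
Qed.

Lemma first_integral_d (c : R) :
  (forall s, a < s < b -> k0 s * k2 s + k1 s ^ 2 / 2 - k0 s ^ 4 / 2 = c) ->
  exists d, forall s, a < s < b -> k0 s * (k1 s ^ 2 - 2 * c - k0 s ^ 4 / 5) = d.
Proof.
  intros Hc. apply ex_const_on_interval. intros s Hs.
  pose proof (dk0 s Hs); pose proof (dk1 s Hs).
  derive_eq. rewrite <- (Hc s Hs). field.
Qed.

Lemma curvature_derivative_zero (s : R) : a < s < b -> k1 s = 0.
Proof.
  intros Hs. destruct (Req_dec (k1 s) 0) as [| Hne]; [assumption | exfalso].
  destruct first_integral_c as [c Hc]. destruct (first_integral_d c Hc) as [d Hd].
  apply (poly_comp_not_locally_zero 252 10 (tl (curvature_poly rho c d)) k0 k1 s).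
  - lra.
  - repeat constructor.
  - apply filter_and.
    + exact (filter_imp _ _ dk0 (locally_between a b s Hs)).
    + apply locally_neq0_continuous; [|exact Hne].
      exact (ex_derive_continuous k1 s (ex_intro _ _ (dk1 s Hs))).
  - apply (filter_imp (fun t => a < t < b)); [|exact (locally_between a b s Hs)].
    intros t Ht. apply (curvature_poly_root rho c d _ (k1 t) (k2 t) (k3 t) (k4 t)).
    + exact (Hc t Ht).
    + exact (Hd t Ht).
    + exact (tangential_eq t Ht).
    + exact (tangential_eq_derive t Ht).
    + exact (normal_eq t Ht).
Qed.

Lemma curvature_constant : a < b ->
  exists C, (forall s, a < s < b -> k0 s = C) /\ C ^ 5 - 2 * rho * C ^ 3 = 0.
Proof.
  intros Hab. set (m := (a + b) / 2). assert (Hm : a < m < b) by (unfold m; lra).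
  assert (Hk2 : forall s, a < s < b -> k2 s = 0)
    by (intros s Hs; exact (is_derive_vanishing_on_interval _ a b s _ curvature_derivative_zero Hs (dk1 s Hs))).
  assert (Hk3 : forall s, a < s < b -> k3 s = 0)
    by (intros s Hs; exact (is_derive_vanishing_on_interval _ a b s _ Hk2 Hs (dk2 s Hs))).
  assert (Hk4 : forall s, a < s < b -> k4 s = 0)
    by (intros s Hs; exact (is_derive_vanishing_on_interval _ a b s _ Hk3 Hs (dk3 s Hs))).
  exists (k0 m). split.
  - intros s Hs. apply (const_on_interval k0 a b); [|exact Hs|exact Hm].
    intros u Hu. rewrite <- (curvature_derivative_zero u Hu). exact (dk0 u Hu).
  - pose proof (normal_eq m Hm) as Hn.
    rewrite (curvature_derivative_zero m Hm), (Hk2 m Hm), (Hk4 m Hm) in Hn.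
    rewrite <- Hn. ring.
Qed.

End CurvatureODE.

Fixpoint derivable_upto (a b : R) (k : nat) (f : R -> R) : Prop :=
  match k with
  | O => True
  | S k => (forall t, a < t < b -> ex_derive f t) /\ derivable_upto a b k (Derive f)
  end.

Definition smooth_fun (a b : R) (f : R -> R) : Prop := forall k, derivable_upto a b k f.

Lemma derivable_upto_ext (a b : R) (k : nat) : forall f h : R -> R,
  (forall t, a < t < b -> f t = h t) -> derivable_upto a b k f -> derivable_upto a b k h.
Proof.
  induction k as [|k IH]; simpl; [tauto|].
  intros f h Hfh [Hex HD]. split.
  - intros t Ht. apply (ex_derive_ext_loc f); [|exact (Hex t Ht)].
    exact (filter_imp _ _ Hfh (locally_between a b t Ht)).
  - apply (IH (Derive f)); [|exact HD].
    intros t Ht. apply Derive_ext_loc.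
    exact (filter_imp _ _ Hfh (locally_between a b t Ht)).
Qed.

Lemma derivable_upto_S (a b : R) (k : nat) : forall f : R -> R,
  derivable_upto a b (S k) f -> derivable_upto a b k f.
Proof.
  induction k as [|k IH]; simpl; [tauto|].
  intros f [H1 [H2 H3]]. split; [exact H1|]. apply IH. split; assumption.
Qed.

Lemma derivable_upto_cst (a b : R) (k : nat) : forall c : R, derivable_upto a b k (fun _ => c).
Proof.
  induction k as [|k IH]; simpl; [tauto|].
  intros c. split.
  - intros t _. apply ex_derive_const.
  - apply (derivable_upto_ext a b k (fun _ => 0)); [|apply IH].
    intros t _. symmetry. apply Derive_const.
Qed.

Lemma derivable_upto_plus (a b : R) (k : nat) : forall f h : R -> R,
  derivable_upto a b k f -> derivable_upto a b k h ->
  derivable_upto a b k (fun s => f s + h s).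
Proof.
  induction k as [|k IH]; simpl; [tauto|].
  intros f h [Hf HDf] [Hh HDh]. split.
  - intros t Ht. exact (ex_derive_plus f h t (Hf t Ht) (Hh t Ht)).
  - apply (derivable_upto_ext a b k (fun s => Derive f s + Derive h s)); [|exact (IH _ _ HDf HDh)].
    intros t Ht. symmetry. exact (Derive_plus f h t (Hf t Ht) (Hh t Ht)).
Qed.

Lemma derivable_upto_mult (a b : R) (k : nat) : forall f h : R -> R,
  derivable_upto a b k f -> derivable_upto a b k h ->
  derivable_upto a b k (fun s => f s * h s).
Proof.
  induction k as [|k IH]; [simpl; tauto|].
  intros f h Hf Hh.
  pose proof (derivable_upto_S a b k f Hf) as Hf'. pose proof (derivable_upto_S a b k h Hh) as Hh'.
  destruct Hf as [Hf HDf], Hh as [Hh HDh]. split.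
  - intros t Ht. exact (ex_derive_mult f h t (Hf t Ht) (Hh t Ht)).
  - apply (derivable_upto_ext a b k (fun s => Derive f s * h s + f s * Derive h s)).
    + intros t Ht. symmetry. exact (Derive_mult f h t (Hf t Ht) (Hh t Ht)).
    + apply derivable_upto_plus; apply IH; assumption.
Qed.

Section SmoothFun.

Variables a b : R.

Lemma smooth_fun_ext (f h : R -> R) :
  (forall t, a < t < b -> f t = h t) -> smooth_fun a b f -> smooth_fun a b h.
Proof. intros Hfh Hf k. exact (derivable_upto_ext a b k f h Hfh (Hf k)). Qed.

Lemma smooth_fun_cst (c : R) : smooth_fun a b (fun _ => c).
Proof. intros k. apply derivable_upto_cst. Qed.

Lemma smooth_fun_plus (f h : R -> R) :
  smooth_fun a b f -> smooth_fun a b h -> smooth_fun a b (fun s => f s + h s).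
Proof. intros Hf Hh k. exact (derivable_upto_plus a b k f h (Hf k) (Hh k)). Qed.

Lemma smooth_fun_mult (f h : R -> R) :
  smooth_fun a b f -> smooth_fun a b h -> smooth_fun a b (fun s => f s * h s).
Proof. intros Hf Hh k. exact (derivable_upto_mult a b k f h (Hf k) (Hh k)). Qed.

Lemma smooth_fun_minus (f h : R -> R) :
  smooth_fun a b f -> smooth_fun a b h -> smooth_fun a b (fun s => f s - h s).
Proof.
  intros Hf Hh. apply (smooth_fun_ext (fun s => f s + (-1) * h s)); [intros; ring|].
  apply smooth_fun_plus; [exact Hf|]. apply smooth_fun_mult; [apply smooth_fun_cst | exact Hh].
Qed.

Lemma smooth_fun_Derive (f : R -> R) : smooth_fun a b f -> smooth_fun a b (Derive f).
Proof. intros Hf k. exact (proj2 (Hf (S k))). Qed.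

Lemma smooth_fun_Derive_n (f : R -> R) (n : nat) :
  smooth_fun a b f -> smooth_fun a b (Derive_n f n).
Proof.
  intros Hf. induction n as [|n IH]; [exact Hf|]. exact (smooth_fun_Derive _ IH).
Qed.

Lemma smooth_fun_ex_derive (f : R -> R) (t : R) : smooth_fun a b f -> a < t < b -> ex_derive f t.
Proof. intros Hf Ht. exact (proj1 (Hf 1%nat) t Ht). Qed.

Lemma smooth_fun_is_derive_n (f : R -> R) (n : nat) (t : R) : smooth_fun a b f -> a < t < b ->
  is_derive (Derive_n f n) t (Derive_n f (S n) t).
Proof.
  intros Hf Ht. apply Derive_correct.
  exact (smooth_fun_ex_derive _ t (smooth_fun_Derive_n f n Hf) Ht).
Qed.

Lemma smooth_fun_of_ex_derive_n (f : R -> R) :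
  (forall n t, a < t < b -> ex_derive_n f n t) -> smooth_fun a b f.
Proof.
  intros Hf.
  assert (H : forall k m, derivable_upto a b k (Derive_n f m)).
  { induction k as [|k IH]; simpl; [tauto|].
    intros m. split; [exact (Hf (S m))|exact (IH (S m))]. }
  intros k. exact (H k 0%nat).
Qed.

End SmoothFun.

Lemma vec3_ext (u v : vec3) : c1 u = c1 v -> c2 u = c2 v -> c3 u = c3 v -> u = v.
Proof. destruct u, v; simpl; intros; subst; reflexivity. Qed.

Ltac vec3_ring :=
  apply vec3_ext; unfold vsub, vadd, vscal, vzero, cross, curvR, ip; simpl; ring.

Section InnerProduct.

Variable e : R.

Lemma ip_sym (u v : vec3) : ip e u v = ip e v u.
Proof. unfold ip; ring. Qed.

Lemma ip_vaddl (u v w : vec3) : ip e (vadd u v) w = ip e u w + ip e v w.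
Proof. unfold ip, vadd; simpl; ring. Qed.

Lemma ip_vscall (k : R) (u w : vec3) : ip e (vscal k u) w = k * ip e u w.
Proof. unfold ip, vscal; simpl; ring. Qed.

Lemma ip_vscalr (k : R) (u w : vec3) : ip e w (vscal k u) = k * ip e w u.
Proof. unfold ip, vscal; simpl; ring. Qed.

Lemma ip_vsubl (u v w : vec3) : ip e (vsub u v) w = ip e u w - ip e v w.
Proof. unfold ip, vsub, vadd, vscal; simpl; ring. Qed.

Lemma ip_vzerol (w : vec3) : ip e vzero w = 0.
Proof. unfold ip, vzero; simpl; ring. Qed.

Lemma cross_lagrange (n T V : vec3) : e * e = 1 ->
  vscal (ip e V (cross e n T)) (cross e n T) =
  vscal e (vadd (vscal (ip e n n * ip e T T - ip e n T ^ 2) V)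
          (vadd (vscal (ip e n T * ip e V n - ip e n n * ip e V T) T)
                (vscal (ip e n T * ip e V T - ip e T T * ip e V n) n))).
Proof.
  intros He.
  assert (He' : e = 1 \/ e = -1) by nra.
  destruct He' as [-> | ->]; vec3_ring.
Qed.

Lemma cross_orthonormal_frame (n T : vec3) :
  e * e = 1 -> ip e n n = e -> ip e T T = 1 -> ip e T n = 0 ->
  ip e (cross e n T) n = 0 /\ ip e (cross e n T) T = 0 /\ ip e (cross e n T) (cross e n T) = 1 /\
  (forall V, ip e V n = 0 -> V = vadd (vscal (ip e V T) T) (vscal (ip e V (cross e n T)) (cross e n T))).
Proof.
  intros He Hnn HTT HTn.
  assert (HnT : ip e n T = 0) by (rewrite ip_sym; exact HTn).
  assert (He' : e = 1 \/ e = -1) by nra.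
  split; [|split; [|split]].
  - destruct He' as [-> | ->]; unfold ip, cross; simpl; ring.
  - destruct He' as [-> | ->]; unfold ip, cross; simpl; ring.
  - transitivity (e * (ip e n n * ip e T T - ip e n T ^ 2)).
    + destruct He' as [-> | ->]; unfold ip, cross; simpl; ring.
    + rewrite Hnn, HTT, HnT. lra.
  - intros V HVn. rewrite (cross_lagrange n T V He), Hnn, HTT, HnT, HVn.
    destruct He' as [-> | ->]; vec3_ring.
Qed.

End InnerProduct.

Lemma eps_sq (rho : R) : eps rho * eps rho = 1.
Proof. unfold eps; destruct (Rlt_dec rho 0); ring. Qed.

Definition tproj (rho : R) (x W : vec3) : vec3 := vsub W (vscal (rho * ip (eps rho) W x) x).

Section TangentProjection.

Variable rho : R.

Lemma tproj_vadd (x U W : vec3) : tproj rho x (vadd U W) = vadd (tproj rho x U) (tproj rho x W).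
Proof. unfold tproj. vec3_ring. Qed.

Lemma tproj_vscal (x U : vec3) (k : R) : tproj rho x (vscal k U) = vscal k (tproj rho x U).
Proof. unfold tproj. vec3_ring. Qed.

Lemma ip_tproj (x V W : vec3) :
  rho * ip (eps rho) V x = 0 -> ip (eps rho) (tproj rho x W) V = ip (eps rho) W V.
Proof.
  intros HV. unfold tproj. rewrite ip_vsubl, ip_vscall, (ip_sym _ x V).
  transitivity (ip (eps rho) W V - ip (eps rho) W x * (rho * ip (eps rho) V x)); [ring|].
  rewrite HV. ring.
Qed.

Lemma tproj_id (x W : vec3) : rho * ip (eps rho) W x = 0 -> tproj rho x W = W.
Proof. intros HW. unfold tproj. rewrite HW. vec3_ring. Qed.

Lemma normalv_unit (x : vec3) : in_space_form rho x ->
  ip (eps rho) (normalv rho x) (normalv rho x) = eps rho.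
Proof.
  unfold in_space_form, normalv. destruct (Req_EM_T rho 0) as [H0 | H0]; intros Hx.
  - subst rho. unfold ip, eps. destruct (Rlt_dec 0 0); simpl; lra.
  - rewrite ip_vscall, ip_vscalr, Hx, <- Rmult_assoc, sqrt_sqrt by apply Rabs_pos.
    unfold eps. destruct (Rlt_dec rho 0).
    + rewrite Rabs_left by lra. field. exact H0.
    + rewrite Rabs_right by lra. field. exact H0.
Qed.

Lemma normalv_orth_position (x V : vec3) :
  ip (eps rho) V (normalv rho x) = 0 -> rho * ip (eps rho) V x = 0.
Proof.
  unfold normalv. destruct (Req_EM_T rho 0) as [H0 | H0]; intros HV.
  - rewrite H0. ring.
  - rewrite ip_vscalr in HV.
    assert (Hs : 0 < sqrt (Rabs rho)) by (apply sqrt_lt_R0, Rabs_pos_lt, H0).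
    destruct (Rmult_integral _ _ HV) as [Hz | Hz]; [lra | rewrite Hz; ring].
Qed.

Lemma tproj_tangent (x W : vec3) : in_space_form rho x -> rho <> 0 ->
  ip (eps rho) (tproj rho x W) (normalv rho x) = 0.
Proof.
  unfold in_space_form, normalv. destruct (Req_EM_T rho 0) as [H0 | H0]; intros Hx Hne; [contradiction|].
  unfold tproj. rewrite ip_vscalr, ip_vsubl, ip_vscall, Hx. field. exact Hne.
Qed.

End TangentProjection.

Lemma ip_curvR (rho : R) (X Y Z W : vec3) :
  ip (eps rho) (curvR rho X Y Z) W =
  rho * (ip (eps rho) Y Z * ip (eps rho) X W - ip (eps rho) X Z * ip (eps rho) Y W).
Proof. unfold curvR. rewrite ip_vscall, ip_vsubl, !ip_vscall. ring. Qed.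

Definition smooth_vec (a b : R) (V : R -> vec3) : Prop :=
  smooth_fun a b (fun s => c1 (V s)) /\ smooth_fun a b (fun s => c2 (V s)) /\
  smooth_fun a b (fun s => c3 (V s)).

Definition is_vderive (V : R -> vec3) (t : R) (W : vec3) : Prop :=
  is_derive (fun s => c1 (V s)) t (c1 W) /\ is_derive (fun s => c2 (V s)) t (c2 W) /\
  is_derive (fun s => c3 (V s)) t (c3 W).

Ltac smooth_fun_tac :=
  repeat first [ assumption | apply smooth_fun_cst | apply smooth_fun_minus
               | apply smooth_fun_plus | apply smooth_fun_mult | apply smooth_fun_Derive ].

Section SmoothVec.

Variables a b : R.

Lemma smooth_vec_cst (v : vec3) : smooth_vec a b (fun _ => v).
Proof. split; [|split]; apply smooth_fun_cst. Qed.

Lemma smooth_vec_vscal (f : R -> R) (W : R -> vec3) :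
  smooth_fun a b f -> smooth_vec a b W -> smooth_vec a b (fun s => vscal (f s) (W s)).
Proof. intros Hf (H1 & H2 & H3). split; [|split]; simpl; smooth_fun_tac. Qed.

Lemma smooth_vec_vsub (U W : R -> vec3) :
  smooth_vec a b U -> smooth_vec a b W -> smooth_vec a b (fun s => vsub (U s) (W s)).
Proof. intros (U1 & U2 & U3) (W1 & W2 & W3). split; [|split]; simpl; smooth_fun_tac. Qed.

Lemma smooth_vec_cross (e : R) (U W : R -> vec3) :
  smooth_vec a b U -> smooth_vec a b W -> smooth_vec a b (fun s => cross e (U s) (W s)).
Proof. intros (U1 & U2 & U3) (W1 & W2 & W3). split; [|split]; simpl; smooth_fun_tac. Qed.

Lemma smooth_fun_ip (e : R) (U W : R -> vec3) :
  smooth_vec a b U -> smooth_vec a b W -> smooth_fun a b (fun s => ip e (U s) (W s)).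
Proof. intros (U1 & U2 & U3) (W1 & W2 & W3). unfold ip. smooth_fun_tac. Qed.

Lemma smooth_vec_vderiv (V : R -> vec3) : smooth_vec a b V -> smooth_vec a b (vderiv V).
Proof. intros (H1 & H2 & H3). split; [|split]; simpl; smooth_fun_tac. Qed.

Lemma smooth_vec_is_vderive (V : R -> vec3) (t : R) :
  smooth_vec a b V -> a < t < b -> is_vderive V t (vderiv V t).
Proof.
  intros (H1 & H2 & H3) Ht.
  split; [|split]; simpl; apply Derive_correct; eapply smooth_fun_ex_derive; eassumption.
Qed.

End SmoothVec.

Lemma is_vderive_unique (V : R -> vec3) (t : R) (W : vec3) : is_vderive V t W -> vderiv V t = W.
Proof. intros (H1 & H2 & H3). apply vec3_ext; simpl; apply is_derive_unique; assumption. Qed.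

Lemma is_derive_ip (e : R) (U W : R -> vec3) (t : R) (U' W' : vec3) :
  is_vderive U t U' -> is_vderive W t W' ->
  is_derive (fun s => ip e (U s) (W s)) t (ip e U' (W t) + ip e (U t) W').
Proof. intros (U1 & U2 & U3) (W1 & W2 & W3). unfold ip. solve_derive. Qed.

Lemma ip_locally_const_derive (e a b C t : R) (U W : R -> vec3) (U' W' : vec3) :
  (forall s, a < s < b -> ip e (U s) (W s) = C) -> a < t < b ->
  is_vderive U t U' -> is_vderive W t W' ->
  ip e U' (W t) + ip e (U t) W' = 0.
Proof.
  intros HC Ht HU HW.
  apply (is_derive_locally_const (fun s => ip e (U s) (W s)) t C).
  - exact (filter_imp _ _ HC (locally_between a b t Ht)).
  - exact (is_derive_ip e U W t U' W' HU HW).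
Qed.

(** * The Frenet frame of a curve in [M^2(rho)] *)

Section FrenetFrame.

Variables (rho a b : R) (g : R -> vec3).
Hypothesis g_smooth : smooth_on a b g.
Hypothesis g_in_M : forall t, a < t < b -> in_space_form rho (g t).
Hypothesis g_unit_speed : arc_length rho a b g.

Definition frame_normal (s : R) : vec3 := Jrot rho (g s) (tangent g s).

Definition geodesic_curvature (s : R) : R := ip (eps rho) (nablaT rho g 1 s) (frame_normal s).

Definition frame_comb (f h s : R) : vec3 := vadd (vscal f (tangent g s)) (vscal h (frame_normal s)).

Local Notation kd n := (Derive_n geodesic_curvature n).

Lemma smooth_vec_curve : smooth_vec a b g.
Proof.
  split; [|split]; apply smooth_fun_of_ex_derive_n; intros n t Ht; apply (g_smooth n t Ht).
Qed.

Lemma smooth_vec_tangent : smooth_vec a b (tangent g).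
Proof. exact (smooth_vec_vderiv a b g smooth_vec_curve). Qed.

Lemma smooth_vec_frame_normal : smooth_vec a b frame_normal.
Proof.
  apply smooth_vec_cross; [|exact smooth_vec_tangent].
  unfold normalv. destruct (Req_EM_T rho 0).
  - apply smooth_vec_cst.
  - apply smooth_vec_vscal; [apply smooth_fun_cst | exact smooth_vec_curve].
Qed.

Lemma smooth_vec_nablaT (k : nat) : smooth_vec a b (nablaT rho g k).
Proof.
  induction k as [|k IH]; [exact smooth_vec_tangent|].
  apply smooth_vec_vsub; [exact (smooth_vec_vderiv a b _ IH)|].
  apply smooth_vec_vscal; [|exact smooth_vec_curve].
  apply smooth_fun_mult; [apply smooth_fun_cst|].
  apply smooth_fun_ip; [exact (smooth_vec_vderiv a b _ IH) | exact smooth_vec_curve].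
Qed.

Lemma smooth_fun_geodesic_curvature : smooth_fun a b geodesic_curvature.
Proof. apply smooth_fun_ip; [apply smooth_vec_nablaT | exact smooth_vec_frame_normal]. Qed.

Lemma is_derive_kd (n : nat) (s : R) : a < s < b -> is_derive (kd n) s (kd (S n) s).
Proof. apply smooth_fun_is_derive_n, smooth_fun_geodesic_curvature. Qed.

Lemma flat_normal_component (V : R -> vec3) (t : R) : rho = 0 ->
  ip (eps rho) (V t) (normalv rho (g t)) = eps rho * c3 (V t).
Proof.
  intros H0. unfold normalv. destruct (Req_EM_T rho 0); [|contradiction].
  unfold ip; simpl; ring.
Qed.

Lemma nabla_tangent (V : R -> vec3) :
  (forall s, a < s < b -> ip (eps rho) (V s) (normalv rho (g s)) = 0) ->
  forall t, a < t < b -> ip (eps rho) (nabla rho g V t) (normalv rho (g t)) = 0.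
Proof.
  intros HV t Ht. change (nabla rho g V t) with (tproj rho (g t) (vderiv V t)).
  destruct (Req_dec rho 0) as [H0 | H0]; [|exact (tproj_tangent rho _ _ (g_in_M t Ht) H0)].
  rewrite tproj_id by (rewrite H0; ring).
  assert (Hc3 : forall s, a < s < b -> c3 (V s) = 0).
  { intros s Hs. pose proof (HV s Hs) as HVs. rewrite flat_normal_component in HVs by exact H0.
    pose proof (eps_sq rho). nra. }
  rewrite (flat_normal_component (vderiv V)) by exact H0. simpl.
  rewrite (Derive_ext_loc _ (fun _ => 0)) by exact (filter_imp _ _ Hc3 (locally_between a b t Ht)).
  rewrite Derive_const. ring.
Qed.

Lemma tangent_normal_orth (t : R) : a < t < b ->
  ip (eps rho) (tangent g t) (normalv rho (g t)) = 0.
Proof.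
  intros Ht. destruct (Req_dec rho 0) as [H0 | H0].
  - rewrite (flat_normal_component (tangent g)) by exact H0. simpl.
    assert (Hc3 : forall s, a < s < b -> c3 (g s) = 0).
    { intros s Hs. pose proof (g_in_M s Hs) as Hg. unfold in_space_form in Hg.
      destruct (Req_EM_T rho 0); [exact Hg | contradiction]. }
    rewrite (Derive_ext_loc _ (fun _ => 0)) by exact (filter_imp _ _ Hc3 (locally_between a b t Ht)).
    rewrite Derive_const. ring.
  - assert (Hgg : forall s, a < s < b -> ip (eps rho) (g s) (g s) = / rho).
    { intros s Hs. pose proof (g_in_M s Hs) as Hg. unfold in_space_form in Hg.
      destruct (Req_EM_T rho 0); [contradiction | exact Hg]. }
    pose proof (smooth_vec_is_vderive a b g t smooth_vec_curve Ht) as Hd.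
    pose proof (ip_locally_const_derive _ a b _ t g g _ _ Hgg Ht Hd Hd) as Hz.
    rewrite (ip_sym _ (g t)) in Hz.
    unfold normalv. destruct (Req_EM_T rho 0); [contradiction|].
    rewrite ip_vscalr. change (vderiv g t) with (tangent g t) in Hz.
    replace (ip (eps rho) (tangent g t) (g t)) with 0 by lra. ring.
Qed.

Lemma tangent_tangential (t : R) : a < t < b -> rho * ip (eps rho) (tangent g t) (g t) = 0.
Proof. intros Ht. exact (normalv_orth_position rho _ _ (tangent_normal_orth t Ht)). Qed.

Lemma frame_orthonormal (t : R) : a < t < b ->
  ip (eps rho) (frame_normal t) (normalv rho (g t)) = 0 /\
  ip (eps rho) (frame_normal t) (tangent g t) = 0 /\
  ip (eps rho) (frame_normal t) (frame_normal t) = 1 /\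
  (forall V, ip (eps rho) V (normalv rho (g t)) = 0 ->
     V = frame_comb (ip (eps rho) V (tangent g t)) (ip (eps rho) V (frame_normal t)) t).
Proof.
  intros Ht. apply cross_orthonormal_frame.
  - apply eps_sq.
  - exact (normalv_unit rho _ (g_in_M t Ht)).
  - exact (g_unit_speed t Ht).
  - exact (tangent_normal_orth t Ht).
Qed.

Lemma frame_normal_tangential (t : R) : a < t < b ->
  rho * ip (eps rho) (frame_normal t) (g t) = 0.
Proof. intros Ht. exact (normalv_orth_position rho _ _ (proj1 (frame_orthonormal t Ht))). Qed.

Lemma ip_frame_comb_tangent (f h t : R) : a < t < b ->
  ip (eps rho) (frame_comb f h t) (tangent g t) = f.
Proof.
  intros Ht. destruct (frame_orthonormal t Ht) as (_ & HNT & _).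
  unfold frame_comb. rewrite ip_vaddl, !ip_vscall, HNT, (g_unit_speed t Ht). ring.
Qed.

Lemma ip_frame_comb_normal (f h t : R) : a < t < b ->
  ip (eps rho) (frame_comb f h t) (frame_normal t) = h.
Proof.
  intros Ht. destruct (frame_orthonormal t Ht) as (_ & HNT & HNN & _).
  unfold frame_comb. rewrite ip_vaddl, !ip_vscall, HNN, ip_sym, HNT. ring.
Qed.

Lemma frenet_tangent (t : R) : a < t < b -> nablaT rho g 1 t = frame_comb 0 (geodesic_curvature t) t.
Proof.
  intros Ht. destruct (frame_orthonormal t Ht) as (_ & _ & _ & Hdecomp).
  pose proof (nabla_tangent _ tangent_normal_orth t Ht) as Htan.
  change (nabla rho g (tangent g) t) with (nablaT rho g 1 t) in Htan.
  rewrite (Hdecomp _ Htan) at 1. f_equal.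
  change (nablaT rho g 1 t) with (tproj rho (g t) (vderiv (tangent g) t)).
  rewrite (ip_tproj rho _ _ _ (tangent_tangential t Ht)).
  pose proof (smooth_vec_is_vderive a b _ t smooth_vec_tangent Ht) as Hd.
  pose proof (ip_locally_const_derive _ a b _ t _ _ _ _ g_unit_speed Ht Hd Hd) as Hz.
  rewrite (ip_sym _ (tangent g t)) in Hz. lra.
Qed.

Lemma frenet_normal (t : R) : a < t < b -> nabla rho g frame_normal t = frame_comb (- geodesic_curvature t) 0 t.
Proof.
  intros Ht. destruct (frame_orthonormal t Ht) as (_ & _ & _ & Hdecomp).
  assert (HNn : forall s, a < s < b -> ip (eps rho) (frame_normal s) (normalv rho (g s)) = 0)
    by (intros s Hs; destruct (frame_orthonormal s Hs) as (HNn & _); exact HNn).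
  rewrite (Hdecomp _ (nabla_tangent _ HNn t Ht)) at 1. f_equal.
  all: change (nabla rho g frame_normal t) with (tproj rho (g t) (vderiv frame_normal t)).
  - rewrite (ip_tproj rho _ _ _ (tangent_tangential t Ht)).
    pose proof (smooth_vec_is_vderive a b _ t smooth_vec_frame_normal Ht) as HdN.
    pose proof (smooth_vec_is_vderive a b _ t smooth_vec_tangent Ht) as HdT.
    assert (HNT : forall s, a < s < b -> ip (eps rho) (frame_normal s) (tangent g s) = 0)
      by (intros s Hs; destruct (frame_orthonormal s Hs) as (_ & HNT & _); exact HNT).
    pose proof (ip_locally_const_derive _ a b _ t _ _ _ _ HNT Ht HdN HdT) as Hz.
    rewrite (ip_sym _ (frame_normal t)), <- (ip_tproj rho (g t) _ _ (frame_normal_tangential t Ht)) in Hz.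
    change (tproj rho (g t) (vderiv (tangent g) t)) with (nablaT rho g 1 t) in Hz.
    unfold geodesic_curvature. lra.
  - rewrite (ip_tproj rho _ _ _ (frame_normal_tangential t Ht)).
    pose proof (smooth_vec_is_vderive a b _ t smooth_vec_frame_normal Ht) as Hd.
    assert (HNN : forall s, a < s < b -> ip (eps rho) (frame_normal s) (frame_normal s) = 1)
      by (intros s Hs; destruct (frame_orthonormal s Hs) as (_ & _ & HNN & _); exact HNN).
    pose proof (ip_locally_const_derive _ a b _ t _ _ _ _ HNN Ht Hd Hd) as Hz.
    rewrite (ip_sym _ (frame_normal t)) in Hz. lra.
Qed.

Lemma nabla_frame_comb (V : R -> vec3) (f h f' h' : R -> R) :
  (forall s, a < s < b -> V s = frame_comb (f s) (h s) s) ->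
  (forall s, a < s < b -> is_derive f s (f' s)) ->
  (forall s, a < s < b -> is_derive h s (h' s)) ->
  forall t, a < t < b ->
  nabla rho g V t = frame_comb (f' t - h t * geodesic_curvature t) (h' t + f t * geodesic_curvature t) t.
Proof.
  intros HV Hf Hh t Ht.
  assert (HVt : vderiv V t = vderiv (fun s => frame_comb (f s) (h s) s) t).
  { assert (Hloc := filter_imp _ _ HV (locally_between a b t Ht)).
    unfold vderiv. apply vec3_ext; cbn [c1 c2 c3]; apply Derive_ext_loc.
    - exact (filter_imp _ _ (fun s Hs => f_equal c1 Hs) Hloc).
    - exact (filter_imp _ _ (fun s Hs => f_equal c2 Hs) Hloc).
    - exact (filter_imp _ _ (fun s Hs => f_equal c3 Hs) Hloc). }
  destruct (smooth_vec_is_vderive a b _ t smooth_vec_tangent Ht) as (T1 & T2 & T3).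
  destruct (smooth_vec_is_vderive a b _ t smooth_vec_frame_normal Ht) as (N1 & N2 & N3).
  pose proof (Hf t Ht). pose proof (Hh t Ht).
  assert (Hd : is_vderive (fun s => frame_comb (f s) (h s) s) t
    (vadd (vadd (vscal (f' t) (tangent g t)) (vscal (f t) (vderiv (tangent g) t)))
          (vadd (vscal (h' t) (frame_normal t)) (vscal (h t) (vderiv frame_normal t))))).
  { unfold frame_comb. split; [|split]; cbn [vadd vscal c1 c2 c3]; solve_derive. }
  change (nabla rho g V t) with (tproj rho (g t) (vderiv V t)).
  rewrite HVt, (is_vderive_unique _ _ _ Hd), !tproj_vadd, !tproj_vscal.
  rewrite (tproj_id rho _ _ (tangent_tangential t Ht)), (tproj_id rho _ _ (frame_normal_tangential t Ht)).
  change (tproj rho (g t) (vderiv (tangent g) t)) with (nablaT rho g 1 t).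
  change (tproj rho (g t) (vderiv frame_normal t)) with (nabla rho g frame_normal t).
  rewrite (frenet_tangent t Ht), (frenet_normal t Ht).
  unfold frame_comb. vec3_ring.
Qed.

Ltac kd_derive :=
  intros u Hu;
  pose proof (is_derive_kd 0 u Hu); pose proof (is_derive_kd 1 u Hu);
  pose proof (is_derive_kd 2 u Hu); pose proof (is_derive_kd 3 u Hu);
  eapply is_derive_eq; [repeat derive_step | cbv beta; simpl INR; simpl pred; reflexivity].

Ltac nablaT_step prev :=
  intros ?; etransitivity;
  [ eapply (nabla_frame_comb _ _ _ _ _ prev); [kd_derive | kd_derive | assumption]
  | f_equal; cbv beta; cbn [Derive_n]; ring ].

Lemma nablaT2_frame (s : R) : a < s < b ->
  nablaT rho g 2 s = frame_comb (- kd 0 s ^ 2) (kd 1 s) s.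
Proof. nablaT_step frenet_tangent. Qed.

Lemma nablaT3_frame (s : R) : a < s < b ->
  nablaT rho g 3 s = frame_comb (-3 * kd 0 s * kd 1 s) (kd 2 s - kd 0 s ^ 3) s.
Proof. nablaT_step nablaT2_frame. Qed.

Lemma nablaT4_frame (s : R) : a < s < b ->
  nablaT rho g 4 s =
  frame_comb (-4 * kd 0 s * kd 2 s - 3 * kd 1 s ^ 2 + kd 0 s ^ 4) (kd 3 s - 6 * kd 0 s ^ 2 * kd 1 s) s.
Proof. nablaT_step nablaT3_frame. Qed.

Lemma nablaT5_frame (s : R) : a < s < b ->
  nablaT rho g 5 s =
  frame_comb (-5 * kd 0 s * kd 3 s - 10 * kd 1 s * kd 2 s + 10 * kd 0 s ^ 3 * kd 1 s)
             (kd 4 s - 15 * kd 0 s * kd 1 s ^ 2 - 10 * kd 0 s ^ 2 * kd 2 s + kd 0 s ^ 5) s.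
Proof. nablaT_step nablaT4_frame. Qed.

Lemma triharmonic_frame_eqs : triharmonic rho a b g -> forall s, a < s < b ->
  -5 * kd 0 s * kd 3 s - 10 * kd 1 s * kd 2 s + 10 * kd 0 s ^ 3 * kd 1 s = 0 /\
  kd 4 s - 15 * kd 0 s * kd 1 s ^ 2 - 10 * kd 0 s ^ 2 * kd 2 s + kd 0 s ^ 5
  + rho * (kd 2 s - 2 * kd 0 s ^ 3) = 0.
Proof.
  intros Htri s Hs. pose proof (Htri s Hs) as H.
  rewrite (nablaT5_frame s Hs), (nablaT3_frame s Hs), (nablaT2_frame s Hs), (frenet_tangent s Hs) in H.
  pose proof (f_equal (fun v => ip (eps rho) v (tangent g s)) H) as HT.
  pose proof (f_equal (fun v => ip (eps rho) v (frame_normal s)) H) as HN.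
  cbv beta in HT, HN.
  rewrite ip_vaddl, ip_vsubl, !ip_curvR, ip_vzerol in HT, HN.
  rewrite !(ip_frame_comb_tangent _ _ s Hs), (g_unit_speed s Hs) in HT.
  destruct (frame_orthonormal s Hs) as (_ & HNT & _).
  rewrite ?(ip_frame_comb_tangent _ _ s Hs), !(ip_frame_comb_normal _ _ s Hs), (g_unit_speed s Hs),
    (ip_sym _ (tangent g s)), HNT in HN.
  cbn [Derive_n] in *. split; [rewrite <- HT | rewrite <- HN]; ring.
Qed.

Lemma triharmonic_constant_curvature : triharmonic rho a b g -> a < b ->
  exists C, (forall s, a < s < b -> geodesic_curvature s = C) /\ C ^ 5 - 2 * rho * C ^ 3 = 0.
Proof.
  intros Htri Hab.
  exact (curvature_constant rho a b (kd 0) (kd 1) (kd 2) (kd 3) (kd 4)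
           (is_derive_kd 0) (is_derive_kd 1) (is_derive_kd 2) (is_derive_kd 3)
           (fun s Hs => proj1 (triharmonic_frame_eqs Htri s Hs))
           (fun s Hs => proj2 (triharmonic_frame_eqs Htri s Hs)) Hab).
Qed.

End FrenetFrame.

Lemma sq_of_nonzero_root (rho C : R) :
  C ^ 5 - 2 * rho * C ^ 3 = 0 -> C <> 0 -> C ^ 2 = 2 * rho.
Proof.
  intros HC HC0. apply (Rmult_eq_reg_l (C ^ 3)); [|apply pow_nonzero, HC0].
  transitivity (C ^ 5 - 2 * rho * C ^ 3 + 2 * rho * C ^ 3); [ring|]. rewrite HC. ring.
Qed.

Theorem corollary3p5 (rho a b : R) (g : R -> vec3) :
  a < b ->
  smooth_on a b g ->
  (forall t, a < t < b -> in_space_form rho (g t)) ->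
  arc_length rho a b g ->
  triharmonic rho a b g ->
  (rho <= 0 -> geodesic rho a b g) /\
  (0 < rho -> geodesic rho a b g \/
     exists kappa : R, kappa ^ 2 = 2 * rho /\ circle_with_curvature rho a b g kappa).
Proof.
  intros Hab Hsm Hsf Hal Htri.
  destruct (triharmonic_constant_curvature rho a b g Hsm Hsf Hal Htri Hab) as (C & HC & HCroot).
  assert (Hcircle : circle_with_curvature rho a b g C).
  { intros t Ht. rewrite (frenet_tangent rho a b g Hsm Hsf Hal t Ht), (HC t Ht).
    unfold frame_comb, frame_normal. vec3_ring. }
  assert (Hgeodesic : C = 0 -> geodesic rho a b g).
  { intros HC0 t Ht. rewrite (Hcircle t Ht), HC0. vec3_ring. }
  split.
  - intros Hrho. apply Hgeodesic. destruct (Req_dec C 0) as [| HC0]; [assumption | exfalso].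
    pose proof (sq_of_nonzero_root rho C HCroot HC0).
    pose proof (Rsqr_pos_lt C HC0). unfold Rsqr in *. nra.
  - intros Hrho. destruct (Req_dec C 0) as [HC0 | HC0]; [left; exact (Hgeodesic HC0) | right].
    exists C. split; [exact (sq_of_nonzero_root rho C HCroot HC0) | exact Hcircle].
Qed.
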